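(* Let $S\subsetneq\mathbb{S}$ be nonempty, let $j^*=\min(\mathbb{S}\setminus S)$ (the highest-quality product not in $S$), and set $q^{\max}=\bar q_0(S)$, $q^{\min}=\bar q_0(S\cup\{j^*\})$ (so $q^{\min}<q^{\max}$). For $q\in(0,1)$ let $v_i(q)=V(qe^{\theta_i-1})$ and $$R_S(q)=\sum_{i\in S}\frac{v_i(q)}{1-v_i(q)}+\frac{1}{q+\sum_{i\in S}v_i(q)}-1 .$$ Assume $v_i(q)<1/2$ for all $i\in S$ and all $q\in[q^{\min},q^{\max}]$. Then $R_S$ is quasi-convex on $[q^{\min},q^{\max}]$.
   Context: Sellers $\mathbb{S}=\{1,\dots,n\}$ with qualities $\theta_1\ge\dots\ge\theta_n\ge0$. $V:(0,\infty)\to(0,1)$: $V(x)=$ the unique $v\in(0,1)$ with $v\exp(v/(1-v))=x$. For nonempty $T\subseteq\mathbb{S}$, $\bar q_0(T)\in(0,1)$ is the unique solution of $\sum_{i\in T}V(\bar q_0e^{\theta_i-1})=1-\bar q_0$. (For $j\notin S$, $R_S(\bar q_0(S\cup\{j\}))$ is the Bertrand equilibrium revenue of displaying $S\cup\{j\}$, and $R_S(\bar q_0(S))$ that of displaying $S$.) A function $f$ on an interval is quasi-convex if $f(\lambda x+(1-\lambda)y)\le\max\{f(x),f(y)\}$ for all $x,y$ in the interval and $\lambda\in[0,1]$. *)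

From Stdlib Require Import Reals Lra List.
Open Scope R_scope.

Definition sumL (l : list nat) (f : nat -> R) : R :=
  fold_right (fun i acc => f i + acc) 0 l.

Definition is_V (V : R -> R) : Prop :=
  forall x, 0 < x -> 0 < V x < 1 /\ V x * exp (V x / (1 - V x)) = x.

Definition vi (V : R -> R) (theta : nat -> R) (i : nat) (q : R) : R :=
  V (q * exp (theta i - 1)).

Definition is_qbar0 (V : R -> R) (theta : nat -> R) (T : list nat) (q : R) : Prop :=
  0 < q < 1 /\ sumL T (fun i => vi V theta i q) = 1 - q.

Definition RS (V : R -> R) (theta : nat -> R) (S : list nat) (q : R) : R :=
  sumL S (fun i => vi V theta i q / (1 - vi V theta i q))
  + 1 / (q + sumL S (fun i => vi V theta i q)) - 1.

Definition quasiconvex_on (f : R -> R) (a b : R) : Prop :=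
  forall x y lam, a <= x <= b -> a <= y <= b -> 0 <= lam <= 1 ->
    f (lam * x + (1 - lam) * y) <= Rmax (f x) (f y).

From Stdlib Require Import Reals Lra List Ranalysis5.
From Coquelicot Require Import Coquelicot.
Open Scope R_scope.

(* Write [v_i(q) = V(q e^{theta_i - 1})], [D(q) = q + sum v_i(q)]
   and [N(q) = q + sum b(v_i(q))], where [b v = v (1-v)^2 / (1 - v + v^2)].
   Inverting [v |-> v exp(v/(1-v))] gives [q v_i'(q) = b(v_i(q))], and from it
   [q R_S'(q) = P(q)] with [P(q) = sum a(v_i(q)) - N(q)/D(q)^2],
   [a v = v / (1 - v + v^2)].  A direct computation gives
   [q D^3 P' = Y D^3 - (q + X) D + 2 N^2] with [Y = sum a'(v_i) b(v_i)] and
   [X = sum b'(v_i) b(v_i)]; three elementary inequalities valid for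
   [0 < v < 1/2] show this is positive.  Hence [P] is strictly increasing on
   [[qmin, qmax]], so [R_S'] changes sign at most once, from negative to
   positive, and a function whose derivative has this single-crossing
   property is quasi-convex. *)

(* Stdlib states these for [plus_fct] etc.; the lambda forms chain directly. *)
Lemma dlim_plus f g x df dg :
  derivable_pt_lim f x df -> derivable_pt_lim g x dg ->
  derivable_pt_lim (fun t => f t + g t) x (df + dg).
Proof. exact (derivable_pt_lim_plus f g x df dg). Qed.

Lemma dlim_minus f g x df dg :
  derivable_pt_lim f x df -> derivable_pt_lim g x dg ->
  derivable_pt_lim (fun t => f t - g t) x (df - dg).
Proof. exact (derivable_pt_lim_minus f g x df dg). Qed.

Lemma dlim_mult f g x df dg :
  derivable_pt_lim f x df -> derivable_pt_lim g x dg ->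
  derivable_pt_lim (fun t => f t * g t) x (df * g x + f x * dg).
Proof. exact (derivable_pt_lim_mult f g x df dg). Qed.

Lemma dlim_div f g x df dg :
  derivable_pt_lim f x df -> derivable_pt_lim g x dg -> g x <> 0 ->
  derivable_pt_lim (fun t => f t / g t) x ((df * g x - dg * f x) / (g x)²).
Proof. exact (derivable_pt_lim_div f g x df dg). Qed.

Lemma dlim_comp f g x df dg :
  derivable_pt_lim f (g x) df -> derivable_pt_lim g x dg ->
  derivable_pt_lim (fun t => f (g t)) x (df * dg).
Proof. intros Hf Hg. exact (derivable_pt_lim_comp g f x dg df Hg Hf). Qed.

Lemma dlim_eq f x l l' : derivable_pt_lim f x l -> l = l' -> derivable_pt_lim f x l'.
Proof. now intros H <-. Qed.

Definition w (v : R) : R := v * exp (v / (1 - v)).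

(* The denominator [1 - v + v^2] appearing in [w'] and everywhere below. *)
Definition mden (v : R) : R := 1 - v + v * v.

Lemma mden_pos v : 0 < mden v.
Proof. unfold mden; nra. Qed.

Lemma w_deriv v : v < 1 ->
  derivable_pt_lim w v (exp (v / (1 - v)) * (1 + v / ((1 - v) * (1 - v)))).
Proof.
  intros Hv. apply is_derive_Reals. unfold w.
  auto_derive; [repeat split; lra|].
  change (v * / (1 + - v)) with (v / (1 - v)). field. lra.
Qed.

Lemma w_increasing x y : 0 < x -> x < y -> y < 1 -> w x < w y.
Proof.
  intros Hx Hxy Hy. unfold w.
  assert (Hexp : exp (x / (1 - x)) < exp (y / (1 - y))).
  { apply exp_increasing.
    assert (Hdiff : y / (1 - y) - x / (1 - x) = (y - x) / ((1 - x) * (1 - y)))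
      by (field; lra).
    assert (0 < (y - x) / ((1 - x) * (1 - y)))
      by (apply Rdiv_lt_0_compat; [lra | apply Rmult_lt_0_compat; lra]).
    lra. }
  pose proof (exp_pos (x / (1 - x))). nra.
Qed.

Section InverseV.

Variable V : R -> R.
Hypothesis HV : is_V V.

Lemma V_range x : 0 < x -> 0 < V x < 1.
Proof. intros Hx. exact (proj1 (HV x Hx)). Qed.

Lemma w_V x : 0 < x -> w (V x) = x.
Proof. intros Hx. exact (proj2 (HV x Hx)). Qed.

Lemma V_increasing x y : 0 < x -> x < y -> V x < V y.
Proof.
  intros Hx Hxy.
  destruct (V_range x Hx), (V_range y ltac:(lra)).
  destruct (Rtotal_order (V x) (V y)) as [|[Heq|Hgt]]; auto.
  - assert (w (V x) = w (V y)) by now rewrite Heq.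
    rewrite !w_V in * by lra. lra.
  - pose proof (w_increasing (V y) (V x)) as Hw.
    rewrite !w_V in Hw by lra. lra.
Qed.

Lemma V_le x y : 0 < x -> x <= y -> V x <= V y.
Proof. intros Hx [Hxy | <-]; [left; now apply V_increasing | lra]. Qed.

Lemma V_continuous x : 0 < x -> continuity_pt V x.
Proof.
  intros Hx.
  destruct (V_range (x / 2)), (V_range (2 * x)); try lra.
  apply (continuity_pt_recip_interv w V (V (x / 2)) (V (2 * x))).
  - apply V_increasing; lra.
  - intros a b Ha Hab Hb. apply w_increasing; lra.
  - intros y Hy _. rewrite w_V in Hy by lra. unfold comp, id. apply w_V. lra.
  - intros y Hy1 Hy2. rewrite w_V in Hy1, Hy2 by lra. split; apply V_le; lra.
  - intros a Ha. apply derivable_continuous_pt.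
    eexists. apply w_deriv. lra.
  - rewrite !w_V by lra. lra.
Qed.

Lemma V_deriv x : 0 < x ->
  derivable_pt_lim V x (V x * ((1 - V x) * (1 - V x)) / mden (V x) / x).
Proof.
  intros Hx.
  destruct (V_range (x / 2)), (V_range (2 * x)), (V_range x Hx); try lra.
  assert (Prf : forall a, V (x / 2) <= a <= V (2 * x) -> derivable_pt w a).
  { intros a Ha. eexists. apply w_deriv. lra. }
  assert (Hin : V (x / 2) <= V x <= V (2 * x)) by (split; apply V_le; lra).
  assert (Hd : derive_pt w (V x) (Prf (V x) Hin)
               = exp (V x / (1 - V x)) * (1 + V x / ((1 - V x) * (1 - V x)))).
  { apply derive_pt_eq_0. apply w_deriv. lra. }
  assert (Hexp : exp (V x / (1 - V x)) = x / V x).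
  { pose proof (w_V x Hx) as Hw. unfold w in Hw. field_simplify_eq; lra. }
  rewrite Hexp in Hd.
  pose proof (mden_pos (V x)).
  eapply dlim_eq.
  - apply (derivable_pt_lim_recip_interv w V (x / 2) (2 * x) x Prf
             (V_continuous x Hx) ltac:(lra) ltac:(lra) Hin).
    + intros y Hy. unfold comp, id. apply w_V. lra.
    + rewrite Hd. apply Rmult_integral_contrapositive. split.
      * apply Rgt_not_eq, Rdiv_lt_0_compat; lra.
      * assert (0 < V x / ((1 - V x) * (1 - V x))) by (apply Rdiv_lt_0_compat; nra).
        lra.
  - rewrite Hd. unfold mden in *. field. repeat split; try lra; nra.
Qed.

End InverseV.

(* [b v] is [q v'(q)] written in terms of [v]; [a v = b v / (1-v)^2]. *)
Definition a_fun (v : R) : R := v / mden v.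
Definition b_fun (v : R) : R := v * ((1 - v) * (1 - v)) / mden v.

Definition a_deriv (v : R) : R := (1 - v * v) / (mden v * mden v).
Definition b_deriv (v : R) : R :=
  (1 - v) * (1 - 3 * v + v * v - v * v * v) / (mden v * mden v).

Lemma a_fun_deriv v : is_derive a_fun v (a_deriv v).
Proof.
  pose proof (mden_pos v). unfold a_fun, a_deriv, mden in *.
  auto_derive; [lra | field; lra].
Qed.

Lemma b_fun_deriv v : is_derive b_fun v (b_deriv v).
Proof.
  pose proof (mden_pos v). unfold b_fun, b_deriv, mden in *.
  auto_derive; [lra | field; lra].
Qed.

(* The three pointwise inequalities behind [P' > 0]; each needs [v < 1/2]. *)
Lemma a_deriv_b_nonneg v : 0 < v < 1 / 2 -> 0 <= a_deriv v * b_fun v.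
Proof.
  intros Hv. pose proof (mden_pos v). unfold a_deriv, b_fun.
  apply Rmult_le_pos; apply Rlt_le, Rdiv_lt_0_compat; nra.
Qed.

Lemma b_fun_lower v : 0 < v < 1 / 2 -> v / 3 <= b_fun v.
Proof.
  intros Hv. pose proof (mden_pos v).
  apply Rmult_le_reg_r with (mden v); auto.
  replace (b_fun v * mden v) with (v * ((1 - v) * (1 - v)))
    by (unfold b_fun; field; lra).
  unfold mden. assert (0 <= (2 - v) * (1 - 2 * v)) by nra. assert (0 <= v * ((2 - v) * (1 - 2 * v))) by nra. nra.
Qed.

Lemma b_deriv_b_upper v : 0 < v < 1 / 2 ->
  b_deriv v * b_fun v <= 4 / 3 * b_fun v - 1 / 3 * v.
Proof.
  intros Hv. pose proof (mden_pos v) as Hm.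
  assert (Hgap : 4 / 3 * b_fun v - 1 / 3 * v - b_deriv v * b_fun v
     = v * v * (5 - 13 * v + 9 * v * v - v * v * v - v * v * v * v)
       / (3 * (mden v * mden v * mden v))).
  { unfold b_fun, b_deriv, mden in *. field. lra. }
  assert (0 <= v * v * (5 - 13 * v + 9 * v * v - v * v * v - v * v * v * v)
               / (3 * (mden v * mden v * mden v))).
  { apply Rmult_le_pos.
    - assert (v * v * v <= v * v / 2) by nra.
      assert (v * v * v * v <= v * v / 4) by nra. nra.
    - apply Rlt_le, Rinv_0_lt_compat. assert (0 < mden v * mden v) by nra. nra. }
  lra.
Qed.

Lemma sumL_ext (l : list nat) f g :
  (forall i, In i l -> f i = g i) -> sumL l f = sumL l g.
Proof. induction l; simpl; intros H; auto. rewrite H, IHl; auto. Qed.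

Lemma sumL_le (l : list nat) f g :
  (forall i, In i l -> f i <= g i) -> sumL l f <= sumL l g.
Proof.
  induction l as [|i l IH]; simpl; intros H; [lra|].
  pose proof (H i (or_introl eq_refl)). pose proof (IH (fun j Hj => H j (or_intror Hj))).
  lra.
Qed.

Lemma sumL_zero (l : list nat) : sumL l (fun _ => 0) = 0.
Proof. induction l; simpl; lra. Qed.

Lemma sumL_nonneg (l : list nat) f : (forall i, In i l -> 0 <= f i) -> 0 <= sumL l f.
Proof. intros H. rewrite <- (sumL_zero l). now apply sumL_le. Qed.

Lemma sumL_lin (l : list nat) c1 c2 f g :
  sumL l (fun i => c1 * f i - c2 * g i) = c1 * sumL l f - c2 * sumL l g.
Proof. induction l; simpl; [|rewrite IHl]; ring. Qed.

Lemma sumL_div (l : list nat) f c : sumL l (fun i => f i / c) = sumL l f / c.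
Proof. induction l; simpl; [|rewrite IHl]; unfold Rdiv; ring. Qed.

Lemma sumL_deriv (l : list nat) (f : nat -> R -> R) (f' : nat -> R) q :
  (forall i, In i l -> derivable_pt_lim (f i) q (f' i)) ->
  derivable_pt_lim (fun t => sumL l (fun i => f i t)) q (sumL l f').
Proof.
  induction l; simpl; intros H.
  - apply derivable_pt_lim_const.
  - apply (dlim_plus (f a)); auto.
Qed.

Section Derivatives.

Variables (V : R -> R) (theta : nat -> R) (S : list nat).
Hypothesis HV : is_V V.

Let v i q := vi V theta i q.

Lemma v_range i q : 0 < q -> 0 < v i q < 1.
Proof. intros Hq. apply (V_range V HV). pose proof (exp_pos (theta i - 1)). nra. Qed.

Lemma v_deriv i q : 0 < q -> derivable_pt_lim (v i) q (b_fun (v i q) / q).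
Proof.
  intros Hq. unfold v, vi. set (c := exp (theta i - 1)).
  assert (Hc : 0 < c) by apply exp_pos.
  assert (Hlin : derivable_pt_lim (fun t => t * c) q c)
    by (apply is_derive_Reals; auto_derive; auto; ring).
  destruct (V_range V HV (q * c)); try nra.
  pose proof (mden_pos (V (q * c))).
  eapply dlim_eq; [exact (dlim_comp V _ q _ _ (V_deriv V HV (q * c) ltac:(nra)) Hlin)|].
  unfold b_fun. field. repeat split; lra.
Qed.

Lemma comp_v_deriv i (h : R -> R) h' q : 0 < q ->
  (forall u, 0 < u < 1 -> is_derive h u (h' u)) ->
  derivable_pt_lim (fun t => h (v i t)) q (h' (v i q) * b_fun (v i q) / q).
Proof.
  intros Hq Hh. eapply dlim_eq.
  - apply dlim_comp; [apply is_derive_Reals, Hh, v_range; auto | now apply v_deriv].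
  - unfold Rdiv. ring.
Qed.

(* [D] is the denominator of the outside-option term of [R_S]; [N = q D'(q)]. *)
Definition Dq (q : R) : R := q + sumL S (fun i => v i q).
Definition Nq (q : R) : R := q + sumL S (fun i => b_fun (v i q)).

(* [P(q) = q R_S'(q)]. *)
Definition Pq (q : R) : R := sumL S (fun i => a_fun (v i q)) - Nq q / (Dq q * Dq q).

(* [q D^3 P'(q)], expressed through the sums [Y] and [X]. *)
Definition Pnum (q : R) : R :=
  sumL S (fun i => a_deriv (v i q) * b_fun (v i q)) * (Dq q * Dq q * Dq q)
  - (q + sumL S (fun i => b_deriv (v i q) * b_fun (v i q))) * Dq q
  + 2 * (Nq q * Nq q).

Lemma Dq_pos q : 0 < q -> 0 < Dq q.
Proof.
  intros Hq. unfold Dq.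
  pose proof (sumL_nonneg S (fun i => v i q) (fun i _ => Rlt_le _ _ (proj1 (v_range i q Hq)))).
  lra.
Qed.

Lemma Dq_deriv q : 0 < q -> derivable_pt_lim Dq q (Nq q / q).
Proof.
  intros Hq. eapply dlim_eq.
  - apply (dlim_plus (fun t => t)); [apply derivable_pt_lim_id|].
    apply (sumL_deriv S (fun i t => v i t)). intros i _. now apply v_deriv.
  - unfold Nq. rewrite sumL_div. field. lra.
Qed.

(* [q R_S'(q) = P(q)]: the [i]-th term contributes [b(v_i)/(1-v_i)^2 = a(v_i)]. *)
Lemma RS_deriv q : 0 < q -> derivable_pt_lim (RS V theta S) q (Pq q / q).
Proof.
  intros Hq. pose proof (Dq_pos q Hq).
  assert (Hfrac : forall u, 0 < u < 1 -> is_derive (fun u => u / (1 - u)) u (1 / ((1 - u) * (1 - u))))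
    by (intros u Hu; auto_derive; [lra | field; lra]).
  eapply dlim_eq.
  - apply dlim_minus; [|apply derivable_pt_lim_const].
    apply dlim_plus.
    + apply (sumL_deriv S (fun i t => v i t / (1 - v i t))). intros i _.
      exact (comp_v_deriv i _ _ q Hq Hfrac).
    + apply (dlim_div (fun _ => 1) Dq); [apply derivable_pt_lim_const | now apply Dq_deriv | lra].
  - unfold Pq. rewrite sumL_div.
    rewrite (sumL_ext S _ (fun i => a_fun (v i q))).
    2: { intros i _. destruct (v_range i q Hq). pose proof (mden_pos (v i q)).
         unfold a_fun, b_fun. field. repeat split; lra. }
    unfold Rsqr. field. split; lra.
Qed.

Lemma Pq_deriv q : 0 < q -> derivable_pt_lim Pq q (Pnum q / (q * (Dq q * Dq q * Dq q))).
Proof.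
  intros Hq. pose proof (Dq_pos q Hq).
  eapply dlim_eq.
  - apply dlim_minus.
    + apply (sumL_deriv S (fun i t => a_fun (v i t))). intros i _.
      exact (comp_v_deriv i _ _ q Hq (fun u _ => a_fun_deriv u)).
    + apply (dlim_div Nq (fun t => Dq t * Dq t)); [| apply dlim_mult; now apply Dq_deriv | nra].
      apply (dlim_plus (fun t => t)); [apply derivable_pt_lim_id|].
      apply (sumL_deriv S (fun i t => b_fun (v i t))). intros i _.
      exact (comp_v_deriv i _ _ q Hq (fun u _ => b_fun_deriv u)).
  - unfold Pnum. rewrite !sumL_div. unfold Rsqr. field. split; lra.
Qed.

Lemma Pnum_pos q : 0 < q -> (forall i, In i S -> v i q < 1 / 2) -> 0 < Pnum q.
Proof.
  intros Hq Hhalf.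
  assert (Hv : forall i, In i S -> 0 < v i q < 1 / 2)
    by (intros i Hi; split; [apply v_range | apply Hhalf]; auto).
  pose proof (sumL_nonneg S _ (fun i Hi => a_deriv_b_nonneg _ (Hv i Hi))) as HY.
  pose proof (sumL_le S _ _ (fun i Hi => b_deriv_b_upper _ (Hv i Hi))) as HX.
  pose proof (sumL_le S _ _ (fun i Hi => b_fun_lower _ (Hv i Hi))) as HB.
  pose proof (sumL_nonneg S (fun i => v i q) (fun i Hi => Rlt_le _ _ (proj1 (Hv i Hi)))) as Hs.
  rewrite sumL_lin in HX. rewrite sumL_div in HB.
  pose proof (Dq_pos q Hq).
  unfold Pnum, Nq in *. unfold Dq in *.
  set (Y := sumL S (fun i => a_deriv (v i q) * b_fun (v i q))) in *.
  set (X := sumL S (fun i => b_deriv (v i q) * b_fun (v i q))) in *.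
  set (B := sumL S (fun i => b_fun (v i q))) in *.
  set (s := sumL S (fun i => v i q)) in *.
  assert (0 <= Y * ((q + s) * (q + s) * (q + s))) by (apply Rmult_le_pos; nra).
  assert ((q + X) * (q + s) <= (q + (4 / 3 * B - 1 / 3 * s)) * (q + s))
    by (apply Rmult_le_compat_r; lra).
  assert (0 <= (B - s / 3) * (B - s / 3)) by nra.
  assert (0 <= q * (8 / 3 * B - 2 / 3 * s)) by nra.
  nra.
Qed.

End Derivatives.

Lemma increasing_of_deriv_pos g g' a b :
  (forall x, a <= x <= b -> derivable_pt_lim g x (g' x)) ->
  (forall x, a <= x <= b -> 0 < g' x) ->
  forall x y, a <= x -> x < y -> y <= b -> g x < g y.
Proof.
  intros Hd Hpos x y Hx Hxy Hy.
  destruct (MVT_cor2 g g' x y Hxy (fun c Hc => Hd c ltac:(lra))) as [c [Hc Hcxy]].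
  assert (0 < g' c * (y - x)) by (apply Rmult_lt_0_compat; [apply Hpos | ]; lra).
  lra.
Qed.

Lemma le_max_of_single_crossing f f' a b :
  (forall x, a <= x <= b -> derivable_pt_lim f x (f' x)) ->
  (forall x y, a <= x -> x < y -> y <= b -> 0 < f' x -> 0 < f' y) ->
  forall x z y, a <= x -> x <= z -> z <= y -> y <= b -> f z <= Rmax (f x) (f y).
Proof.
  intros Hd Hcross x z y Hx Hxz Hzy Hy.
  destruct (Rle_dec (f z) (Rmax (f x) (f y))) as [|Hbig]; auto.
  exfalso. apply Rnot_le_lt in Hbig.
  pose proof (Rmax_l (f x) (f y)). pose proof (Rmax_r (f x) (f y)).
  destruct Hxz as [Hxz|]; [|subst; lra]. destruct Hzy as [Hzy|]; [|subst; lra].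
  destruct (MVT_cor2 f f' x z Hxz (fun c Hc => Hd c ltac:(lra))) as [c1 [E1 Hc1]].
  destruct (MVT_cor2 f f' z y Hzy (fun c Hc => Hd c ltac:(lra))) as [c2 [E2 Hc2]].
  assert (Hup : 0 < f' c1).
  { destruct (Rlt_le_dec 0 (f' c1)); auto.
    assert (f' c1 * (z - x) <= 0) by (apply Rmult_le_0_r; lra). lra. }
  assert (Hdown : f' c2 <= 0).
  { destruct (Rle_dec (f' c2) 0) as [|Hn]; auto.
    assert (0 <= f' c2 * (y - z)) by (apply Rmult_le_pos; lra). lra. }
  pose proof (Hcross c1 c2 ltac:(lra) ltac:(lra) ltac:(lra) Hup). lra.
Qed.

(* Every convex combination lies between its endpoints, so the previous lemma
   is exactly quasi-convexity. *)
Lemma quasiconvex_of_single_crossing f f' a b :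
  (forall x, a <= x <= b -> derivable_pt_lim f x (f' x)) ->
  (forall x y, a <= x -> x < y -> y <= b -> 0 < f' x -> 0 < f' y) ->
  quasiconvex_on f a b.
Proof.
  intros Hd Hcross x y lam Hx Hy Hlam.
  pose proof (le_max_of_single_crossing f f' a b Hd Hcross) as Hbetween.
  destruct (Rle_dec x y).
  - apply Hbetween; nra.
  - rewrite Rmax_comm. apply Hbetween; nra.
Qed.

Theorem lemma5 (n : nat) (theta : nat -> R) (V : R -> R)
  (HV : is_V V)
  (Htheta_mono : forall i j, (1 <= i)%nat -> (i <= j)%nat -> (j <= n)%nat -> theta j <= theta i)
  (Htheta_nn : forall i, (1 <= i <= n)%nat -> 0 <= theta i)
  (S : list nat) (HS_nodup : NoDup S)
  (HS_sub : forall i, In i S -> (1 <= i <= n)%nat)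
  (HS_ne : S <> nil)
  (jstar : nat) (Hj_range : (1 <= jstar <= n)%nat) (Hj_notin : ~ In jstar S)
  (Hj_min : forall j, (1 <= j <= n)%nat -> ~ In j S -> (jstar <= j)%nat)
  (qmax qmin : R)
  (Hqmax : is_qbar0 V theta S qmax)
  (Hqmin : is_qbar0 V theta (jstar :: S) qmin)
  (Hhalf : forall i q, In i S -> qmin <= q <= qmax -> vi V theta i q < 1 / 2) :
  quasiconvex_on (RS V theta S) qmin qmax.
Proof.
  destruct Hqmin as [[Hqmin_pos _] _].
  apply (quasiconvex_of_single_crossing _ (fun q => Pq V theta S q / q)).
  { intros q Hq. apply RS_deriv; auto. lra. }
  assert (HP : forall x y, qmin <= x -> x < y -> y <= qmax -> Pq V theta S x < Pq V theta S y).
  { apply increasing_of_deriv_pos with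
      (g' := fun q => Pnum V theta S q / (q * (Dq V theta S q * Dq V theta S q * Dq V theta S q))).
    - intros q Hq. apply Pq_deriv; auto. lra.
    - intros q Hq. pose proof (Dq_pos V theta S HV q ltac:(lra)).
      apply Rdiv_lt_0_compat.
      + apply Pnum_pos; [exact HV | lra | intros i Hi; apply Hhalf; auto; lra].
      + repeat apply Rmult_lt_0_compat; lra. }
  intros x y Hx Hxy Hy Hpos.
  assert (0 < Pq V theta S x).
  { replace (Pq V theta S x) with (Pq V theta S x / x * x) by (field; lra).
    apply Rmult_lt_0_compat; lra. }
  pose proof (HP x y Hx Hxy Hy).
  apply Rdiv_lt_0_compat; lra.
Qed.
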